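(* Let $\bar X\in\mathbb{R}_{\ge0}^{m\times n}$, $u\in\mathbb{R}^m$, $v\in\mathbb{R}^n$, and let $(p,q)$ be the row and column sums of any realization $Y$ of the biproportional Poisson model with base matrix $\bar X$ and parameters $(u,v)$. Then IPF (with zero-marginal handling) on $(\bar X,p,q)$ converges, i.e. the scaled matrices converge to a matrix with row sums $p$ and column sums $q$.
   Context: Biproportional Poisson model: entries $Y_{ij}$ independent with $Y_{ij}\sim\mathrm{Poisson}(e^{u_i}\bar X_{ij}e^{-v_j})$ if $\bar X_{ij}>0$ and $Y_{ij}=0$ otherwise; $p_i=\sum_jY_{ij}$, $q_j=\sum_iY_{ij}$. IPF with zero-marginal handling on $(X,p,q)$ with $\sum_ip_i=\sum_jq_j$: start with $d^0=\mathbf 1_m$, $d^1=\mathbf 1_n$; alternately update rows (for each $i$: $d^0_i\leftarrow0$ if $p_i=0$, else $d^0_i\leftarrow p_i/\sum_jX_{ij}d^1_j$) and columns (for each $j$: $d^1_j\leftarrow0$ if $q_j=0$, else $d^1_j\leftarrow q_j/\sum_iX_{ij}d^0_i$); after each update the scaled matrix is $\mathrm{diag}(d^0)X\mathrm{diag}(d^1)$. *)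

From HB Require Import structures.
From mathcomp Require Import all_boot all_order all_algebra.
From mathcomp Require Import all_classical all_reals all_analysis.
Set Implicit Arguments. Unset Strict Implicit. Unset Printing Implicit Defensive.
Import Order.TTheory GRing.Theory Num.Theory.
Local Open Scope ring_scope.

Section Defs.
Variable R : realType.

Definition poisson_pmf (lam : R) (k : nat) : R :=
  lam ^+ k * expR (- lam) / (k`!)%:R.

Definition bp_rate m n (X : 'M[R]_(m, n)) (u : 'I_m -> R) (v : 'I_n -> R)
  (i : 'I_m) (j : 'I_n) : R := expR (u i) * X i j * expR (- v j).

(* Y is a realization of the biproportional Poisson model with base matrix X
   and parameters (u,v): each entry lies in the support of its law, i.e.
   Y_ij has positive Poisson(rate) probability if X_ij > 0, and Y_ij = 0
   otherwise. *)
Definition bp_realization m n (X : 'M[R]_(m, n)) (u : 'I_m -> R)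
  (v : 'I_n -> R) (Y : 'I_m -> 'I_n -> nat) : Prop :=
  forall i j, (0 < X i j -> 0 < poisson_pmf (bp_rate X u v i j) (Y i j)) /\
              (X i j = 0 -> Y i j = 0%N).

Definition row_sums m n (Y : 'I_m -> 'I_n -> nat) (i : 'I_m) : R :=
  (\sum_(j < n) Y i j)%N%:R.
Definition col_sums m n (Y : 'I_m -> 'I_n -> nat) (j : 'I_n) : R :=
  (\sum_(i < m) Y i j)%N%:R.

Definition ipf_row m n (X : 'M[R]_(m, n)) (p : 'I_m -> R) (d1 : 'I_n -> R)
  : 'I_m -> R :=
  fun i => if p i == 0 then 0 else p i / \sum_(j < n) X i j * d1 j.
Definition ipf_col m n (X : 'M[R]_(m, n)) (q : 'I_n -> R) (d0 : 'I_m -> R)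
  : 'I_n -> R :=
  fun j => if q j == 0 then 0 else q j / \sum_(i < m) X i j * d0 i.

(* State (d0, d1) after t single updates (t = 0: initial all-ones;
   odd t: just after a row update; even t > 0: just after a column update). *)
Fixpoint ipf_state m n (X : 'M[R]_(m, n)) p q (t : nat)
  : ('I_m -> R) * ('I_n -> R) :=
  match t with
  | 0%N => (fun _ => 1, fun _ => 1)
  | t'.+1 =>
      let: (d0, d1) := ipf_state X p q t' in
      if odd t then (ipf_row X p d1, d1) else (d0, ipf_col X q d0)
  end.

Definition ipf_mat m n (X : 'M[R]_(m, n)) p q (t : nat) : 'M[R]_(m, n) :=
  let: (d0, d1) := ipf_state X p q t in
  \matrix_(i, j) (d0 i * X i j * d1 j).

End Defs.

From HB Require Import structures.
From mathcomp Require Import all_boot all_order all_algebra.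
From mathcomp Require Import all_classical all_reals all_analysis.
From mathcomp Require Import ring lra.
Set Implicit Arguments. Unset Strict Implicit. Unset Printing Implicit Defensive.
Import Order.TTheory GRing.Theory Num.Theory.
Import numFieldNormedType.Exports.
Local Open Scope classical_set_scope.
Local Open Scope ring_scope.

(* IPF is coordinate ascent on the potential
     Psi(d0, d1) = sum_i p_i ln d0_i + sum_j q_j ln d1_j :
   for every nonnegative W with margins (p, q) and support inside that of X,
     KL(W || diag(d0) X diag(d1)) = KL(W || X) - Psi(d0, d1),
   and the realization Y is such a W.  Hence Psi is bounded above, and each
   update raises it by the Kullback-Leibler divergence of the prescribed margin
   from the current one, which dominates their squared Hellinger distance; so
   the margins of the scaled matrices converge to (p, q).  The scaled matrices
   are bounded, and a cluster point L has margins (p, q), so KL(L || M_t)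
   converges; its limit is 0 along a subsequence tending to L, hence
   KL(L || M_t) -> 0 and M_t -> L. *)

Lemma ler_sum_term (R : numDomainType) (I : finType) (F : I -> R) i0 :
  (forall i, 0 <= F i) -> F i0 <= \sum_i F i.
Proof. by move=> F0; rewrite (bigD1 i0) //= lerDl sumr_ge0. Qed.

Lemma sum_gt0_term (R : numDomainType) (I : finType) (F : I -> R) i0 :
  (forall i, 0 <= F i) -> 0 < F i0 -> 0 < \sum_i F i.
Proof. by move=> F0 /lt_le_trans; apply; apply: ler_sum_term. Qed.

Lemma sum_gt0_exists (R : numDomainType) (I : finType) (F : I -> R) :
  (forall i, 0 <= F i) -> 0 < \sum_i F i -> exists i, 0 < F i.
Proof.
move=> F0; apply: contraPP => /forallNP F_le0.
rewrite big1 ?ltxx // => i _.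
by move: (F0 i); rewrite le_eqVlt => /orP[/eqP <-|/F_le0].
Qed.

Lemma mul_lnB_ge_sqr_sqrtB (R : realType) (a b : R) :
  0 <= a -> 0 <= b -> (0 < a -> 0 < b) ->
  a - b + (Num.sqrt a - Num.sqrt b) ^+ 2 <= a * (ln a - ln b).
Proof.
move=> a_ge0 b_ge0 ab.
have [->|a_neq0] := eqVneq a 0.
  by rewrite sqrtr0 !sub0r sqrrN sqr_sqrtr // mul0r addNr.
have a_gt0 : 0 < a by rewrite lt_def a_neq0.
suff key (s t : R) : 0 < s -> 0 < t ->
    s ^+ 2 - t ^+ 2 + (s - t) ^+ 2 <= s ^+ 2 * (ln (s ^+ 2) - ln (t ^+ 2)).
  have s_gt0 : 0 < Num.sqrt a by rewrite sqrtr_gt0.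
  have t_gt0 : 0 < Num.sqrt b by rewrite sqrtr_gt0 ab.
  by have := key _ _ s_gt0 t_gt0; rewrite !sqr_sqrtr.
move=> s_gt0 t_gt0; rewrite !lnXn //.
have : ln (t / s) <= t / s - 1.
  by rewrite -[X in ln X](subrK 1) addrC le_ln1Dx // ltrBrDr addNr divr_gt0.
rewrite ln_div ?posrE // -(ler_pM2l (mulr_gt0 s_gt0 s_gt0)).
have -> : s * s * (t / s - 1) = s * t - s * s by field; rewrite gt_eqF.
move=> h; nra.
Qed.

Lemma cvg_sum (R : realType) (I : finType) (F : I -> R^nat) (l : I -> R) :
  (forall i, F i @ \oo --> l i) -> (fun t => \sum_i F i t) @ \oo --> \sum_i l i.
Proof. by move=> Fl; apply: (cvg_big add_continuous) => // i _; apply: Fl. Qed.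

Lemma increasing_seq_ge (f : nat -> nat) : increasing_seq f -> forall k, (k <= f k)%N.
Proof.
move=> /increasing_seqP f_incr; elim => // k IHk.
exact: leq_ltn_trans IHk (f_incr k).
Qed.

Lemma increasing_seq_comp (f g : nat -> nat) :
  increasing_seq f -> increasing_seq g -> increasing_seq (f \o g).
Proof. by move=> f_incr g_incr a b; exact: etrans (f_incr _ _) (g_incr _ _). Qed.

Lemma cvg_subseq (T : topologicalType) (u : T ^nat) (l : T) (f : nat -> nat) :
  increasing_seq f -> u @ \oo --> l -> (u \o f) @ \oo --> l.
Proof.
move=> f_incr; apply: cvg_comp => A [N _ NA]; exists N => // k /= Nk.
by apply: NA => /=; exact: leq_trans Nk (increasing_seq_ge f_incr k).
Qed.

Lemma bounded_fun_le (R : realType) (u : nat -> R) (B : R) :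
  (forall s, `|u s| <= B) -> bounded_fun u.
Proof.
move=> uB; rewrite /bounded_near; near=> M => s _ /=.
by apply: le_trans (uB s) _; near: M; apply: nbhs_pinfty_ge; exact: num_real.
Unshelve. all: by end_near.
Qed.

Lemma bolzano_weierstrass_fin (R : realType) (K : finType) (x : K -> nat -> R) :
  (forall k, bounded_fun (x k)) ->
  exists2 f : nat -> nat, increasing_seq f & forall k, cvgn (x k \o f).
Proof.
move=> x_bnd; suff [f f_incr fx] : exists2 f : nat -> nat, increasing_seq f &
    forall k, k \in enum K -> cvgn (x k \o f).
  by exists f => // k; apply: fx; rewrite mem_enum.
elim: (enum K) => [|k s [f f_incr fx]]; first by exists id.
have [|g g_incr gx] := @bolzano_weierstrass R (x k \o f).
  by move: (x_bnd k); rewrite /bounded_near; apply: filterS => M /= xM s' _; exact: xM.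
exists (f \o g); first exact: increasing_seq_comp.
move=> k'; rewrite inE => /orP [/eqP -> //|k's].
have /cvg_ex [l fl] := fx k' k's.
by apply/cvg_ex; exists l; exact: cvg_subseq g_incr fl.
Qed.

Lemma squeeze_cvg0 (R : realType) (g h : R ^nat) :
  (forall s, 0 <= g s <= h s) -> h @ \oo --> 0 -> g @ \oo --> 0.
Proof.
move=> gh h0; apply: (@squeeze_cvgr _ _ _ _ (fun=> 0) h) => //; last exact: cvg_cst.
by near=> s; apply: gh.
Unshelve. all: by end_near.
Qed.

Lemma cvg_sqr_sqrtB0 (R : realType) (f : R ^nat) (c : R) :
  (forall s, 0 <= f s) -> 0 <= c ->
  (fun s => (Num.sqrt c - Num.sqrt (f s)) ^+ 2) @ \oo --> 0 -> f @ \oo --> c.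
Proof.
move=> f_ge0 c_ge0 fc.
have : (fun s => Num.sqrt (f s) - Num.sqrt c) @ \oo --> 0.
  apply: norm_cvg0; under eq_fun do rewrite -sqrtr_sqr -sqrrN opprB.
  by rewrite -sqrtr0; exact: cvg_comp fc (@sqrt_continuous R 0).
move=> /subr_cvg0 sqrt_fc.
have -> : f = (fun s => Num.sqrt (f s) * Num.sqrt (f s)).
  by apply/funext => s; rewrite -expr2 sqr_sqrtr.
by rewrite -[X in _ --> X](sqr_sqrtr c_ge0) expr2; exact: cvgM.
Qed.

Section divergences.
Variables (R : realType) (I : finType).
Implicit Types a b : I -> R.

Definition relent a b := \sum_i a i * (ln (a i) - ln (b i)).
Definition hellinger a b := \sum_i (Num.sqrt (a i) - Num.sqrt (b i)) ^+ 2.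

Lemma hellinger_ge0 a b : 0 <= hellinger a b.
Proof. by apply: sumr_ge0 => i _; apply: sqr_ge0. Qed.

Lemma hellinger_ge_term a b i :
  (Num.sqrt (a i) - Num.sqrt (b i)) ^+ 2 <= hellinger a b.
Proof. by apply: ler_sum_term => j; apply: sqr_ge0. Qed.

Lemma relent_ge_hellinger a b :
  (forall i, 0 <= a i) -> (forall i, 0 <= b i) -> (forall i, 0 < a i -> 0 < b i) ->
  \sum_i (a i - b i) + hellinger a b <= relent a b.
Proof.
move=> a_ge0 b_ge0 ab; rewrite -big_split /=.
by apply: ler_sum => i _; exact: mul_lnB_ge_sqr_sqrtB (a_ge0 i) (b_ge0 i) (ab i).
Qed.

Lemma hellinger_id a : hellinger a a = 0.
Proof. by rewrite /hellinger big1 // => i _; rewrite subrr expr0n. Qed.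

Lemma relent_ge_hellinger_eq_mass a b :
  (forall i, 0 <= a i) -> (forall i, 0 <= b i) -> (forall i, 0 < a i -> 0 < b i) ->
  \sum_i a i = \sum_i b i -> hellinger a b <= relent a b.
Proof.
move=> a_ge0 b_ge0 ab ab_mass; have := relent_ge_hellinger a_ge0 b_ge0 ab.
by rewrite sumrB ab_mass subrr add0r.
Qed.

Lemma rescaleK (x r : R) :
  0 <= x -> (0 < x -> 0 < r) -> (if x == 0 then 0 else x / r) * r = x.
Proof.
have [->|x_neq0] := eqVneq x 0; first by rewrite mul0r.
move=> x_ge0 xr; have x_gt0 : 0 < x by rewrite lt_def x_neq0.
by rewrite divfK // gt_eqF // xr.
Qed.

Lemma relent_rescale a d r : (forall i, 0 <= a i) ->
  (forall i, 0 < a i -> 0 < d i /\ 0 < r i) ->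
  \sum_i a i * ln (if a i == 0 then 0 else a i / r i) - \sum_i a i * ln (d i)
  = relent a (fun i => d i * r i).
Proof.
move=> a_ge0 adr; rewrite -sumrB; apply: eq_bigr => i _.
have [->|a_neq0] := eqVneq (a i) 0; first by rewrite !mul0r subrr.
have a_gt0 : 0 < a i by rewrite lt_def a_neq0 a_ge0.
have [d_gt0 r_gt0] := adr i a_gt0.
rewrite ln_div ?posrE // lnM ?posrE //; ring.
Qed.

Lemma relent_cvg0 a (b : nat -> I -> R) : (forall i, 0 <= a i) ->
  (forall i, (fun s => b s i) @ \oo --> a i) -> (fun s => relent a (b s)) @ \oo --> 0.
Proof.
move=> a_ge0 ba.
have -> : 0 = relent a a by rewrite /relent big1 // => i _; rewrite subrr mulr0.
apply: cvg_sum => i; have [a0|a_neq0] := eqVneq (a i) 0.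
  by rewrite a0; under eq_fun do rewrite mul0r; rewrite mul0r; apply: cvg_cst.
have a_gt0 : 0 < a i by rewrite lt_def a_neq0 a_ge0.
apply: cvgM; first exact: cvg_cst.
by apply: cvgB; [exact: cvg_cst | exact: cvg_comp (ba i) (continuous_ln a_gt0)].
Qed.

End divergences.

Section ipf.
Variables (R : realType) (m n : nat) (X : 'M[R]_(m, n)).
Variables (p : 'I_m -> R) (q : 'I_n -> R).
Hypothesis X_ge0 : forall i j, 0 <= X i j.

Definition feasible (W : 'I_m -> 'I_n -> R) :=
  [/\ forall i j, 0 <= W i j, forall i j, 0 < W i j -> 0 < X i j,
      forall i, \sum_j W i j = p i & forall j, \sum_i W i j = q j].

Lemma feasible_pos W i j : feasible W -> 0 < W i j -> [/\ 0 < X i j, 0 < p i & 0 < q j].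
Proof.
case=> W_ge0 WX <- <- W_gt0; split; first exact: WX.
  exact: sum_gt0_term (W_ge0 i) W_gt0.
exact: sum_gt0_term (W_ge0^~ j) W_gt0.
Qed.

Variable Z : 'I_m -> 'I_n -> R.
Hypothesis Z_feasible : feasible Z.

Lemma p_ge0 i : 0 <= p i.
Proof. by case: Z_feasible => Z_ge0 _ <- _; apply: sumr_ge0. Qed.

Lemma q_ge0 j : 0 <= q j.
Proof. by case: Z_feasible => Z_ge0 _ _ <-; apply: sumr_ge0. Qed.

Lemma row_support i : 0 < p i -> exists j, 0 < X i j /\ 0 < q j.
Proof.
have [Z_ge0 _ <- _] := Z_feasible; case/sum_gt0_exists => // j /(feasible_pos Z_feasible).
by case=> X_gt0 _ q_gt0; exists j.
Qed.

Lemma col_support j : 0 < q j -> exists i, 0 < X i j /\ 0 < p i.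
Proof.
have [Z_ge0 _ _ <-] := Z_feasible; case/sum_gt0_exists => [i|i]; first exact: Z_ge0.
by case/(feasible_pos Z_feasible) => X_gt0 p_gt0 _; exists i.
Qed.

Definition mass := \sum_i p i.

Lemma sum_q : \sum_j q j = mass.
Proof.
have [_ _ Zp Zq] := Z_feasible; rewrite /mass.
under eq_bigr do rewrite -Zq; under [RHS]eq_bigr do rewrite -Zp.
exact: exchange_big.
Qed.

Definition scales_pos (d0 : 'I_m -> R) (d1 : 'I_n -> R) :=
  [/\ forall i, 0 <= d0 i, forall j, 0 <= d1 j,
      forall i, 0 < p i -> 0 < d0 i & forall j, 0 < q j -> 0 < d1 j].

Lemma rowden_gt0 d0 d1 i : scales_pos d0 d1 -> 0 < p i -> 0 < \sum_j X i j * d1 j.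
Proof.
case=> _ d1_ge0 _ d1_gt0 /row_support [j [X_gt0 q_gt0]].
by apply: (sum_gt0_term (i0 := j)) => [k|]; rewrite ?mulr_ge0 ?mulr_gt0 ?d1_gt0.
Qed.

Lemma colden_gt0 d0 d1 j : scales_pos d0 d1 -> 0 < q j -> 0 < \sum_i X i j * d0 i.
Proof.
case=> d0_ge0 _ d0_gt0 _ /col_support [i [X_gt0 p_gt0]].
by apply: (sum_gt0_term (i0 := i)) => [k|]; rewrite ?mulr_ge0 ?mulr_gt0 ?d0_gt0.
Qed.

Lemma scales_pos_row d0 d1 : scales_pos d0 d1 -> scales_pos (ipf_row X p d1) d1.
Proof.
move=> d_pos; have [_ d1_ge0 _ d1_gt0] := d_pos; split=> // i; rewrite /ipf_row.
  case: ifP => // _; rewrite divr_ge0 ?p_ge0 //.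
  by apply: sumr_ge0 => j _; rewrite mulr_ge0.
by move=> p_gt0; rewrite gt_eqF // divr_gt0 // (rowden_gt0 d_pos).
Qed.

Lemma scales_pos_col d0 d1 : scales_pos d0 d1 -> scales_pos d0 (ipf_col X q d0).
Proof.
move=> d_pos; have [d0_ge0 _ d0_gt0 _] := d_pos; split=> // j; rewrite /ipf_col.
  case: ifP => // _; rewrite divr_ge0 ?q_ge0 //.
  by apply: sumr_ge0 => i _; rewrite mulr_ge0.
by move=> q_gt0; rewrite gt_eqF // divr_gt0 // (colden_gt0 d_pos).
Qed.

Definition rowscale t := (ipf_state X p q t).1.
Definition colscale t := (ipf_state X p q t).2.

Lemma ipf_scales_pos t : scales_pos (rowscale t) (colscale t).
Proof.
elim: t => [|t]; first by split=> * /=; rewrite ?ler01 ?ltr01.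
rewrite /rowscale /colscale /=; case: (ipf_state X p q t) => d0 d1 /= d_pos.
by case: ifP => _ /=; [exact: scales_pos_row d_pos | exact: scales_pos_col d_pos].
Qed.

Lemma ipf_state_row t : odd t.+1 ->
  rowscale t.+1 = ipf_row X p (colscale t) /\ colscale t.+1 = colscale t.
Proof. by rewrite /rowscale /colscale /= => ->; case: (ipf_state X p q t). Qed.

Lemma ipf_state_col t : ~~ odd t.+1 ->
  rowscale t.+1 = rowscale t /\ colscale t.+1 = ipf_col X q (rowscale t).
Proof. by rewrite /rowscale /colscale /= => /negbTE ->; case: (ipf_state X p q t). Qed.

Definition scaled t i j := rowscale t i * X i j * colscale t j.

Lemma ipf_matE t i j : ipf_mat X p q t i j = scaled t i j.
Proof.
rewrite /ipf_mat /scaled /rowscale /colscale.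
by case: (ipf_state X p q t) => d0 d1; rewrite mxE.
Qed.

Lemma scaled_ge0 t i j : 0 <= scaled t i j.
Proof. by have [d0_ge0 d1_ge0 _ _] := ipf_scales_pos t; rewrite !mulr_ge0. Qed.

Lemma scaled_gt0 t i j : 0 < X i j -> 0 < p i -> 0 < q j -> 0 < scaled t i j.
Proof.
move=> X_gt0 p_gt0 q_gt0; have [_ _ d0_gt0 d1_gt0] := ipf_scales_pos t.
by rewrite !mulr_gt0 ?d0_gt0 ?d1_gt0.
Qed.

Definition rowsum t i := \sum_j scaled t i j.
Definition colsum t j := \sum_i scaled t i j.

Lemma rowsumE t i : rowsum t i = rowscale t i * \sum_j X i j * colscale t j.
Proof. by rewrite /rowsum mulr_sumr; apply: eq_bigr => j _; rewrite mulrA. Qed.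

Lemma colsumE t j : colsum t j = colscale t j * \sum_i X i j * rowscale t i.
Proof. by rewrite /colsum mulr_sumr; apply: eq_bigr => i _; rewrite /scaled; ring. Qed.

Lemma rowsum_ge0 t i : 0 <= rowsum t i.
Proof. by apply: sumr_ge0 => j _; apply: scaled_ge0. Qed.

Lemma colsum_ge0 t j : 0 <= colsum t j.
Proof. by apply: sumr_ge0 => i _; apply: scaled_ge0. Qed.

Lemma rowsum_row_step t i : odd t.+1 -> rowsum t.+1 i = p i.
Proof.
case/ipf_state_row => d0E d1E; rewrite rowsumE d0E d1E /ipf_row.
exact/rescaleK/rowden_gt0/ipf_scales_pos/p_ge0.
Qed.

Lemma colsum_col_step t j : ~~ odd t.+1 -> colsum t.+1 j = q j.
Proof.
case/ipf_state_col => d0E d1E; rewrite colsumE d0E d1E /ipf_col.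
exact/rescaleK/colden_gt0/ipf_scales_pos/q_ge0.
Qed.

Lemma sum_rowsum t : (0 < t)%N -> \sum_i rowsum t i = mass.
Proof.
case: t => // t _; have [t_row|t_col] := boolP (odd t.+1).
  by apply: eq_bigr => i _; rewrite rowsum_row_step.
by rewrite /rowsum exchange_big -sum_q; apply: eq_bigr => j _; exact: colsum_col_step.
Qed.

Lemma sum_colsum t : (0 < t)%N -> \sum_j colsum t j = mass.
Proof. by move=> t_gt0; rewrite /colsum exchange_big; exact: sum_rowsum. Qed.

Lemma scaled_le_mass t i j : (0 < t)%N -> scaled t i j <= mass.
Proof.
move=> t_gt0; apply: (@le_trans _ _ (rowsum t i)).
  by apply: ler_sum_term => k; apply: scaled_ge0.
by rewrite -(sum_rowsum t_gt0); apply: ler_sum_term => k; apply: rowsum_ge0.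
Qed.

Definition potential t :=
  \sum_i p i * ln (rowscale t i) + \sum_j q j * ln (colscale t j).

Lemma potential_row_step t : odd t.+1 ->
  potential t.+1 - potential t = relent p (rowsum t).
Proof.
move=> t_row; have [d0E d1E] := ipf_state_row t_row.
have [_ _ d0_gt0 d1_gt0] := ipf_scales_pos t.
rewrite /potential d0E d1E opprD addrACA subrr addr0 /ipf_row relent_rescale.
- by congr relent; apply/funext => i; rewrite rowsumE.
- exact: p_ge0.
by move=> i p_gt0; rewrite d0_gt0 // (rowden_gt0 (ipf_scales_pos t)).
Qed.

Lemma potential_col_step t : ~~ odd t.+1 ->
  potential t.+1 - potential t = relent q (colsum t).
Proof.
move=> t_col; have [d0E d1E] := ipf_state_col t_col.
have [_ _ d0_gt0 d1_gt0] := ipf_scales_pos t.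
rewrite /potential d0E d1E opprD addrACA subrr add0r /ipf_col relent_rescale.
- by congr relent; apply/funext => j; rewrite colsumE.
- exact: q_ge0.
by move=> j q_gt0; rewrite d1_gt0 // (colden_gt0 (ipf_scales_pos t)).
Qed.

(* After the first step one of the two margins is matched exactly, so only the
   other one contributes. *)
Lemma potential_incr t : (0 < t)%N ->
  hellinger p (rowsum t) + hellinger q (colsum t) <= potential t.+1 - potential t.
Proof.
case: t => // t _; have [t_row|t_col] := boolP (odd t.+2).
- have -> : colsum t.+1 = q by apply/funext => j; exact: colsum_col_step.
  rewrite hellinger_id addr0 potential_row_step //.
  apply: relent_ge_hellinger_eq_mass; [exact: p_ge0|exact: rowsum_ge0| |].
    move=> i p_gt0; rewrite rowsumE mulr_gt0 //.
      by have [_ _ d0_gt0 _] := ipf_scales_pos t.+1; apply: d0_gt0.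
    exact: (rowden_gt0 (ipf_scales_pos t.+1)).
  by rewrite sum_rowsum.
- have -> : rowsum t.+1 = p by apply/funext => i; exact/rowsum_row_step/negbNE.
  rewrite hellinger_id add0r potential_col_step //.
  apply: relent_ge_hellinger_eq_mass; [exact: q_ge0|exact: colsum_ge0| |].
    move=> j q_gt0; rewrite colsumE mulr_gt0 //.
      by have [_ _ _ d1_gt0] := ipf_scales_pos t.+1; apply: d1_gt0.
    exact: (colden_gt0 (ipf_scales_pos t.+1)).
  by rewrite sum_colsum // sum_q.
Qed.

Definition kl (W : 'I_m -> 'I_n -> R) t := \sum_i relent (W i) (scaled t i).
Definition kl_base (W : 'I_m -> 'I_n -> R) := \sum_i relent (W i) (X i).

Lemma kl_ipf W t : feasible W -> kl W t = kl_base W - potential t.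
Proof.
move=> W_feas; have [W_ge0 _ Wp Wq] := W_feas.
have [_ _ d0_gt0 d1_gt0] := ipf_scales_pos t.
have split_ln i j : W i j * (ln (W i j) - ln (scaled t i j)) =
    W i j * (ln (W i j) - ln (X i j)) - W i j * ln (rowscale t i)
    - W i j * ln (colscale t j).
  have [->|W_neq0] := eqVneq (W i j) 0; first by rewrite !mul0r !subrr.
  have W_gt0 : 0 < W i j by rewrite lt_def W_neq0 W_ge0.
  have [X_gt0 p_gt0 q_gt0] := feasible_pos W_feas W_gt0.
  rewrite /scaled !lnM ?posrE ?mulr_gt0 ?d0_gt0 ?d1_gt0 //; ring.
have -> : kl W t = kl_base W - \sum_i \sum_j W i j * ln (rowscale t i)
                              - \sum_i \sum_j W i j * ln (colscale t j).
  rewrite /kl /kl_base /relent -!sumrB; apply: eq_bigr => i _.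
  by rewrite -!sumrB; apply: eq_bigr => j _; apply: split_ln.
rewrite /potential opprD addrA; congr (_ - _ - _).
  by apply: eq_bigr => i _; rewrite -mulr_suml Wp.
by rewrite exchange_big; apply: eq_bigr => j _; rewrite -mulr_suml Wq.
Qed.

Lemma hellinger_le_kl W t : feasible W -> (0 < t)%N ->
  \sum_i hellinger (W i) (scaled t i) <= kl W t.
Proof.
move=> W_feas t_gt0; have [W_ge0 _ Wp _] := W_feas.
have row_bound i : \sum_j (W i j - scaled t i j) + hellinger (W i) (scaled t i)
    <= relent (W i) (scaled t i).
  apply: relent_ge_hellinger => // j; first exact: scaled_ge0.
  by case/(feasible_pos W_feas) => *; apply: scaled_gt0.
apply: le_trans (ler_sum _ (fun i _ => row_bound i)); rewrite big_split /= lerDr.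
by under eq_bigr do rewrite sumrB Wp; rewrite sumrB (sum_rowsum t_gt0) subrr.
Qed.

Lemma potential_le_kl_base t : (0 < t)%N -> potential t <= kl_base Z.
Proof.
move=> t_gt0; rewrite -subr_ge0 -kl_ipf //.
apply: le_trans (hellinger_le_kl Z_feasible t_gt0).
by apply: sumr_ge0 => i _; apply: hellinger_ge0.
Qed.

Lemma potential_cvg : cvgn (fun s => potential s.+1).
Proof.
apply: nondecreasing_is_cvgn.
  apply/nondecreasing_seqP => s; rewrite -subr_ge0.
  apply: le_trans (potential_incr (ltn0Sn _)).
  by rewrite addr_ge0 ?hellinger_ge0.
by exists (kl_base Z) => _ [s _ <-]; apply: potential_le_kl_base.
Qed.

Lemma margins_cvg :
  (forall i, (fun s => rowsum s.+1 i) @ \oo --> p i) /\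
  (forall j, (fun s => colsum s.+1 j) @ \oo --> q j).
Proof.
have /cvg_ex [l pot_l] := potential_cvg.
have incr0 : (fun s => potential s.+2 - potential s.+1) @ \oo --> 0.
  have pot_l' := pot_l; rewrite -cvg_shiftS in pot_l'.
  by rewrite -(subrr l); apply: cvgB pot_l' pot_l.
have incr_ge s := potential_incr (ltn0Sn s).
split=> [i|j]; apply: cvg_sqr_sqrtB0.
- by move=> s; apply: rowsum_ge0.
- exact: p_ge0.
- apply: squeeze_cvg0 incr0 => s; rewrite sqr_ge0 /=; apply: le_trans (incr_ge s).
  by apply: le_trans (hellinger_ge_term _ _ i) _; rewrite lerDl hellinger_ge0.
- by move=> s; apply: colsum_ge0.
- exact: q_ge0.
- apply: squeeze_cvg0 incr0 => s; rewrite sqr_ge0 /=; apply: le_trans (incr_ge s).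
  by apply: le_trans (hellinger_ge_term _ _ j) _; rewrite lerDr hellinger_ge0.
Qed.

Lemma ipf_cluster : exists2 phi : nat -> nat, increasing_seq phi &
  exists2 L : 'M[R]_(m, n), feasible L &
    forall i j, (fun s => scaled (phi s).+1 i j) @ \oo --> L i j.
Proof.
pose x (k : 'I_m * 'I_n) s := scaled s.+1 k.1 k.2.
have [|phi phi_incr x_cvg] := bolzano_weierstrass_fin (x := x).
  move=> k; have xB s : `|x k s| <= mass.
    by rewrite ger0_norm ?scaled_ge0 // scaled_le_mass.
  exact: bounded_fun_le xB.
pose L := \matrix_(i, j) lim (x (i, j) \o phi @ \oo).
have phiL i j : (fun s => scaled (phi s).+1 i j) @ \oo --> L i j.
  by rewrite mxE; exact: x_cvg (i, j).
have [row_cvg col_cvg] := margins_cvg.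
exists phi => //; exists L => //; split.
- move=> i j; rewrite mxE; apply: limr_ge; first exact: x_cvg (i, j).
  by near=> s; apply: scaled_ge0.
- move=> i j L_gt0; rewrite lt_def X_ge0 andbT; apply: contraTneq L_gt0 => X0.
  suff -> : L i j = 0 by rewrite ltxx.
  have := phiL i j; have -> : (fun s => scaled (phi s).+1 i j) = fun=> 0.
    by apply/funext => s; rewrite /scaled X0 mulr0 mul0r.
  by move=> L0; exact: cvg_unique L0 (cvg_cst _).
- move=> i; exact: cvg_unique (cvg_sum (phiL i)) (cvg_subseq phi_incr (row_cvg i)).
- move=> j; exact: cvg_unique (cvg_sum (phiL^~ j)) (cvg_subseq phi_incr (col_cvg j)).
Unshelve. all: by end_near.
Qed.

(* The potential converges, so [kl L] converges along the whole sequence; it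
   tends to [0] along the subsequence converging to [L], hence everywhere. *)
Lemma ipf_cvg : exists2 L : 'M[R]_(m, n), feasible L &
  forall i j, (fun t => scaled t i j) @ \oo --> L i j.
Proof.
have [phi phi_incr [L L_feas phiL]] := ipf_cluster.
have [L_ge0 _ _ _] := L_feas.
have /cvg_ex [l pot_l] := potential_cvg.
have kl_l : (fun s => kl L s.+1) @ \oo --> kl_base L - l.
  by under eq_fun do rewrite kl_ipf //; exact: cvgB (cvg_cst _) pot_l.
have kl_phi0 : (fun s => kl L (phi s).+1) @ \oo --> 0.
  have -> : (0 : R) = \sum_(i < m) 0 by rewrite big1.
  by apply: cvg_sum => i; apply: relent_cvg0 => j; [exact: L_ge0 | exact: phiL].
have kl_lim0 : kl_base L - l = 0.
  exact: cvg_unique (cvg_subseq phi_incr kl_l) kl_phi0.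
rewrite kl_lim0 in kl_l; exists L => // i j; rewrite -cvg_shiftS.
apply: cvg_sqr_sqrtB0 => [s||]; rewrite ?scaled_ge0 ?L_ge0 //.
apply: squeeze_cvg0 kl_l => s; rewrite sqr_ge0 /=.
apply: le_trans (hellinger_le_kl L_feas (ltn0Sn s)).
apply: le_trans (hellinger_ge_term _ _ j) _.
apply: (ler_sum_term (F := fun i => hellinger (L i) (scaled s.+1 i))) => k.
exact: hellinger_ge0.
Qed.

End ipf.

Theorem mainTheorem7 (R : realType) (m n : nat) (X : 'M[R]_(m, n))
  (u : 'I_m -> R) (v : 'I_n -> R) (Y : 'I_m -> 'I_n -> nat) :
  (forall i j, 0 <= X i j) ->
  bp_realization X u v Y ->
  exists L : 'M[R]_(m, n),
    (forall i j,
       (fun t => ipf_mat X (row_sums R Y) (col_sums R Y) t i j) @ \oo --> L i j) /\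
    (forall i, \sum_(j < n) L i j = row_sums R Y i) /\
    (forall j, \sum_(i < m) L i j = col_sums R Y j).
Proof.
move=> X_ge0 Y_real.
have Y_feas : feasible X (row_sums R Y) (col_sums R Y) (fun i j => (Y i j)%:R).
  split=> [i j|i j|i|j]; rewrite /row_sums /col_sums ?ler0n ?natr_sum //.
  rewrite ltr0n => Y_gt0; rewrite lt_def X_ge0 andbT.
  by apply: contraTneq Y_gt0 => /(proj2 (Y_real i j)) ->.
have [L [_ _ Lp Lq] L_cvg] := ipf_cvg X_ge0 Y_feas.
exists L; split=> [i j|]; last by split.
by under eq_fun do rewrite ipf_matE; exact: L_cvg.
Qed.
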